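(* Consider the shard-based blockchain game with uniform (equal) reward sharing described in the context, and assume $\tau < n$. Then the strategy profile in which every one of the $N$ processors plays Cooperate ($C$), called All-C, is not a Nash equilibrium.
   Context: There are $N$ processors partitioned into $k$ shards (committees), each containing $n = N/k$ processors. In a given epoch each processor $P_i$ in shard $j$ holds a finite set (vector) $x_i^j$ of transactions to verify. Fixed parameters: mandatory cost $c^m>0$ (already paid by every processor), fixed optional cost $c^f>0$, per-transaction verification cost $c^v>0$, per-transaction fee reward $r>0$, block reward $BR>0$, and a consensus threshold $\tau$, an integer with $1\le \tau\le n$. Each processor simultaneously chooses a strategy in $\{C, D\}$ (Cooperate or Defect). Let $l_j$ be the number of cooperating processors in shard $j$. Shard $j$ reaches consensus iff $l_j\ge\tau$, in which case it outputs a fixed nonempty set $y^j$ of transactions; a new block is appended iff every shard reaches consensus. Uniform reward sharing: if the block is appended, each processor receives $S=\frac{BR + r\sum_{j=1}^k |y^j|}{N}$, otherwise $S=0$. The payoff of a cooperating processor $P_i$ in shard $j$ is $S-(c^m+c^f+|x_i^j|c^v)$, and that of a defecting processor is $S-c^m$. A Nash equilibrium is a strategy profile in which no processor can strictly increase its payoff by unilaterally changing its strategy. *)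

From HB Require Import structures.
From mathcomp Require Import all_boot all_order all_algebra.
Set Implicit Arguments. Unset Strict Implicit. Unset Printing Implicit Defensive.
Import Order.TTheory GRing.Theory Num.Theory.
Local Open Scope ring_scope.

(* Processors are indexed by (shard j : 'I_k, position i : 'I_n); N = k * n.
   A strategy profile assigns true (= Cooperate) or false (= Defect). *)
Definition profile (k n : nat) := 'I_k -> 'I_n -> bool.

Section Game.
Variables (R : realFieldType) (Tx : finType) (k n tau : nat).
Variables (cm cf cv r BR : R).
Variables (x : 'I_k -> 'I_n -> {set Tx}) (y : 'I_k -> {set Tx}).

Definition coop_count (s : profile k n) (j : 'I_k) : nat :=
  #|[set i : 'I_n | s j i]|.

Definition consensus (s : profile k n) (j : 'I_k) : bool :=
  (tau <= coop_count s j)%N.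

Definition block_appended (s : profile k n) : bool :=
  [forall j, consensus s j].

Definition share (s : profile k n) : R :=
  if block_appended s then
    (BR + r * (\sum_(j < k) (#|y j|)%:R)) / ((k * n)%N)%:R
  else 0.

Definition payoff (s : profile k n) (j : 'I_k) (i : 'I_n) : R :=
  if s j i then share s - (cm + cf + (#|x j i|)%:R * cv)
  else share s - cm.

Definition deviate (s : profile k n) (j : 'I_k) (i : 'I_n) (b : bool)
  : profile k n :=
  fun j' i' => if (j' == j) && (i' == i) then b else s j' i'.

Definition nash_equilibrium (s : profile k n) : Prop :=
  forall (j : 'I_k) (i : 'I_n) (b : bool),
    ~ (payoff s j i < payoff (deviate s j i b) j i).

End Game.

Definition all_C (k n : nat) : profile k n := fun _ _ => true.
Arguments all_C : clear implicits.

From HB Require Import structures.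
From mathcomp Require Import all_boot all_order all_algebra.
Import Order.TTheory GRing.Theory Num.Theory.
Local Open Scope ring_scope.

(* When tau < n, a single defection from All-C leaves every shard with at
   least n - 1 >= tau cooperators, so the block is still appended and the
   defector keeps the same share S while saving c^f + |x_i^j| c^v > 0. *)

Section UniformSharing.
Variables (R : realFieldType) (Tx : finType) (k n tau : nat).
Variables (cm cf cv r BR : R).
Variables (x : 'I_k -> 'I_n -> {set Tx}) (y : 'I_k -> {set Tx}).

Lemma coop_count_all_C (j : 'I_k) : coop_count (all_C k n) j = n.
Proof. by rewrite /coop_count -[RHS]card_ord; apply: eq_card => i; rewrite inE. Qed.

Lemma coop_count_deviate (s : profile k n) (j : 'I_k) (i : 'I_n) (b : bool)
    (j' : 'I_k) :
  ((coop_count s j').-1 <= coop_count (deviate s j i b) j')%N.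
Proof.
rewrite /coop_count (cardsD1 i); set A := [set _ | _].
apply: (@leq_trans #|A :\ i|); first by case: (i \in A); rewrite ?add1n ?add0n ?leq_pred.
apply: subset_leq_card; apply/subsetP => i'.
by rewrite !inE /deviate => /andP[/negPf -> ->]; rewrite andbF.
Qed.

Lemma block_appended_all_C : (tau <= n)%N -> block_appended tau (all_C k n).
Proof. by move=> htaun; apply/forallP => j; rewrite /consensus coop_count_all_C. Qed.

Lemma block_appended_deviate_all_C (j : 'I_k) (i : 'I_n) (b : bool) :
  (tau < n)%N -> block_appended tau (deviate (all_C k n) j i b).
Proof.
move=> htau_lt; apply/forallP => j'; rewrite /consensus.
apply: leq_trans (coop_count_deviate _ _ _ _ _).
by rewrite coop_count_all_C -ltnS (ltn_predK htau_lt).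
Qed.

Lemma share_eq (s s' : profile k n) :
  block_appended tau s = block_appended tau s' ->
  share tau r BR y s = share tau r BR y s'.
Proof. by rewrite /share => ->. Qed.

Lemma payoff_lt_defect (s : profile k n) (j : 'I_k) (i : 'I_n) :
  0 < cf -> 0 <= cv -> s j i ->
  block_appended tau (deviate s j i false) = block_appended tau s ->
  payoff tau cm cf cv r BR x y s j i
    < payoff tau cm cf cv r BR x y (deviate s j i false) j i.
Proof.
move=> hcf hcv sji /share_eq share_dev.
rewrite /payoff sji {1}/deviate !eqxx /= share_dev.
rewrite ltrD2l ltrN2 -addrA ltrDl ltr_wpDr // mulr_ge0 ?ler0n //.
Qed.

End UniformSharing.

Theorem theorem2 (R : realFieldType) (Tx : finType) (k n tau : nat)
  (cm cf cv r BR : R)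
  (x : 'I_k -> 'I_n -> {set Tx}) (y : 'I_k -> {set Tx})
  (hk : (0 < k)%N) (htau1 : (1 <= tau)%N) (htaun : (tau <= n)%N)
  (htau_lt : (tau < n)%N)
  (hcm : 0 < cm) (hcf : 0 < cf) (hcv : 0 < cv) (hr : 0 < r) (hBR : 0 < BR)
  (hy : forall j, y j != set0) :
  ~ nash_equilibrium tau cm cf cv r BR x y (all_C k n).
Proof.
move=> nashC.
have hn : (0 < n)%N by apply: leq_ltn_trans htau_lt.
pose j0 : 'I_k := Ordinal hk; pose i0 : 'I_n := Ordinal hn.
apply: (nashC j0 i0 false); apply: payoff_lt_defect; rewrite ?ltW //.
by rewrite block_appended_all_C ?block_appended_deviate_all_C.
Qed.
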